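(* For all integers $n\ge k\ge 1$, if $(G,I,O)$ is a geometry with $|V(G)|=n$ and $|O|=k$ which has a flow, then $|E(G)|\le kn-\binom{k+1}{2}$. Equivalently, $\Gamma(n,k)\le kn-\binom{k+1}{2}$.
   Context: Graphs are finite, simple, undirected, without self-loops; $v\sim w$ denotes adjacency. A geometry is $(G,I,O)$ with $I,O\subseteq V(G)$; $O^c=V(G)\setminus O$, $I^c=V(G)\setminus I$. A flow for $(G,I,O)$ is a pair $(f,\preceq)$, $f:O^c\to I^c$ a function, $\preceq$ a partial order on $V(G)$, such that for all $v\in O^c$, $w\in V(G)$: $v\sim f(v)$; $v\preceq f(v)$; $w\sim f(v)\Rightarrow v\preceq w$. $\Gamma(n,k)$ denotes the maximum number of edges of a graph $G$ in a geometry $(G,I,O)$ that has a flow, subject to $|V(G)|=n$ and $|O|=k$. *)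

From mathcomp Require Import all_boot.
Set Implicit Arguments. Unset Strict Implicit. Unset Printing Implicit Defensive.

Definition simple_graph (T : finType) (e : rel T) : Prop :=
  symmetric e /\ irreflexive e.

Definition edges (T : finType) (e : rel T) : {set {set T}} :=
  [set [set x; y] | x in T, y in T & e x y].

Definition partial_order (T : finType) (le : rel T) : Prop :=
  reflexive le /\ antisymmetric le /\ transitive le.

(* (f, le) is a flow for the geometry (G, I, O), G given by e.
   f is a total function T -> T, but only its values on O^c matter. *)
Definition is_flow (T : finType) (e : rel T) (I O : {set T})
    (f : T -> T) (le : rel T) : Prop :=
  partial_order le /\
  forall v, v \notin O ->
    [/\ f v \notin I, e v (f v), le v (f v) &
        forall w, e w (f v) -> le v w].

Definition has_flow (T : finType) (e : rel T) (I O : {set T}) : Prop :=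
  exists (f : T -> T) (le : rel T), is_flow e I O f le.

From mathcomp Require Import all_boot.
Set Implicit Arguments. Unset Strict Implicit. Unset Printing Implicit Defensive.

(* A flow survives, in a restricted form, the deletion of a
   vertex, so we prove by induction on |S| the stronger statement
       |E(S)| + C(|O|+1, 2) <= |O| * |S|
   for every vertex set S carrying a flow "inside S" with outputs O ⊆ S.
   - If S = O, delete any vertex x: it has at most |S| - 1 neighbours in S,
     and C(k+1,2) = C(k,2) + k closes the induction.
   - Otherwise pick u ∈ S \ O maximal for the order among non-outputs.  Then
     x := f(u) is an output, and every neighbour of x in S is u or another
     output, so deg_S(x) <= |O|.  On S \ {x} the same f is a flow with
     outputs (O \ {x}) ∪ {u}, again of size |O|, and the induction closes. *)

Section EdgeCounting.
Variables (T : finType) (e : rel T).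
Hypotheses (e_sym : symmetric e) (e_irr : irreflexive e).

Definition edges_in (S : {set T}) : {set {set T}} :=
  [set [set x; y] | x in S, y in S & e x y].

Definition nbhd (S : {set T}) (x : T) : {set T} := [set y in S | e x y].

Lemma in_nbhd (S : {set T}) x y : (y \in nbhd S x) = (y \in S) && e x y.
Proof. by rewrite inE. Qed.

Lemma edges_inP (S : {set T}) z :
  reflect (exists a b, [/\ a \in S, b \in S, e a b & z = [set a; b]])
          (z \in edges_in S).
Proof.
apply: (iffP imset2P).
  by case=> a b aS; rewrite inE => /andP[bS eab] ->; exists a, b.
case=> a [b [aS bS eab ->]]; apply: (Imset2spec aS) => //.
by rewrite inE bS.
Qed.

Lemma edges_setT : edges e = edges_in setT.
Proof.
apply/setP => z; apply/imset2P/edges_inP => [[a b _] | [a [b [_ _ eab ->]]]].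
  by rewrite inE => eab ->; exists a, b; rewrite !inE.
by exists a b; rewrite ?inE.
Qed.

Lemma card_edges_in_del (S : {set T}) x : x \in S ->
  #|edges_in S| <= #|edges_in (S :\ x)| + #|nbhd S x|.
Proof.
move=> xS; apply: leq_trans (leq_add (leqnn _) (leq_imset_card (fun y => [set x; y]) _)).
apply: leq_trans (leq_card_setU _ _); apply: subset_leq_card.
apply/subsetP => _ /edges_inP[a [b [aS bS eab ->]]].
rewrite in_setU; have [ax | ax] := eqVneq a x.
  by subst a; apply/orP; right; apply/imsetP; exists b; rewrite // in_nbhd bS.
have [bx | bx] := eqVneq b x.
  by subst b; apply/orP; right; apply/imsetP; exists a; [rewrite in_nbhd aS e_sym | rewrite setUC].
by apply/orP; left; apply/edges_inP; exists a, b; rewrite !inE ax bx.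
Qed.

(* Induction step when every vertex is an output: deleting any vertex x
   loses at most |S| - 1 edges, and C(n+2,2) = C(n+1,2) + (n+1). *)
Lemma edge_bound_del_any (S : {set T}) x n : x \in S -> #|S :\ x| = n ->
    #|edges_in (S :\ x)| + 'C(n.+1, 2) <= n * n ->
  #|edges_in S| + 'C(n.+2, 2) <= n.+1 * n.+1.
Proof.
move=> xS cardSx IHn.
have deg_x : #|nbhd S x| <= n.
  rewrite -cardSx; apply/subset_leq_card/subsetP => y; rewrite in_nbhd !inE.
  by case/andP=> -> exy; rewrite andbT; apply: contraTneq exy => ->; rewrite e_irr.
rewrite binS bin1; apply: leq_trans (leq_add (card_edges_in_del xS) (leqnn _)) _.
rewrite addnACA; apply: leq_trans (leq_add IHn (leq_add deg_x (leqnn _))) _.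
by rewrite mulSn mulnS addnC addnA (addnC n).
Qed.

End EdgeCounting.

Section Maximal.
Variables (T : finType) (le : rel T).
Hypothesis le_po : partial_order le.

(* Every nonempty finite set has a maximal element: take one with the
   fewest upper bounds. *)
Lemma exists_maximal (A : {set T}) : A != set0 ->
  exists2 u, u \in A & forall w, w \in A -> le u w -> w = u.
Proof.
case: le_po => [le_refl [le_anti le_trans]].
case/set0Pn => a aA.
case: (arg_minnP (fun u => #|[set w | le u w]|) aA) => u uA u_min.
exists u => // w wA le_uw.
have up_sub : [set z | le w z] \subset [set z | le u z].
  by apply/subsetP => z; rewrite !inE => /(le_trans _ _ _ le_uw).
have up_eq : [set z | le w z] = [set z | le u z].
  by apply/eqP; rewrite eqEcard up_sub u_min.
have : u \in [set z | le w z] by rewrite up_eq inE le_refl.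
by rewrite inE => le_wu; apply: le_anti; rewrite le_wu le_uw.
Qed.

End Maximal.

Section RestrictedFlow.
Variables (T : finType) (e : rel T) (le : rel T).
Hypotheses (e_sym : symmetric e) (e_irr : irreflexive e).
Hypothesis le_po : partial_order le.

(* A flow living inside the vertex set S, with outputs O. *)
Definition flow_on (S O : {set T}) (f : T -> T) : Prop :=
  forall v, v \in S -> v \notin O ->
    [/\ f v \in S, e v (f v), le v (f v) &
        forall w, w \in S -> e w (f v) -> le v w].

Lemma flow_on_setT (I O : {set T}) f : is_flow e I O f le -> flow_on setT O f.
Proof.
by case=> _ fl v _ /fl[_ evf lvf nb]; split; rewrite ?inE // => w _ /nb.
Qed.

Variables (S O : {set T}) (f : T -> T) (u : T).
Hypothesis flS : flow_on S O f.
Hypotheses (uS : u \in S) (uO : u \notin O).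
Hypothesis u_max : forall w, w \in S :\: O -> le u w -> w = u.

Lemma succ_maximal :
  [/\ f u \in S, f u \in O & nbhd e S (f u) \subset u |: (O :\ f u)].
Proof.
have [fuS eufu lufu nb] := flS uS uO.
have fu_neq_u : f u != u by apply: contraTneq eufu => ->; rewrite e_irr.
have fuO : f u \in O.
  apply: contraR fu_neq_u => fuO.
  by rewrite (u_max _ lufu) ?eqxx // inE fuO fuS.
split=> //; apply/subsetP => y; rewrite in_nbhd !inE => /andP[yS exy].
have [yO | yO] := boolP (y \in O).
  by rewrite andbT; apply/orP; right; apply: contraTneq exy => ->; rewrite e_irr.
by rewrite (u_max _ (nb y yS _)) ?eqxx ?inE ?yO // e_sym.
Qed.

(* Deleting f u and turning u into an output preserves the flow. *)
Lemma flow_on_shift : flow_on (S :\ f u) (u |: (O :\ f u)) f.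
Proof.
case: le_po => [_ [le_anti _]].
have [fuS eufu lufu nb] := flS uS uO.
move=> v; rewrite !inE negb_or => /andP[vfu vS] /andP[vu].
rewrite vfu /= => vO; have [fvS evf lvf nbv] := flS vS vO.
split=> // [|w]; last by rewrite inE => /andP[_]; exact: nbv.
rewrite fvS andbT; apply: contra_neq vu => fvfu.
by apply: le_anti; rewrite (nb v vS) -?fvfu // (nbv u uS) ?fvfu.
Qed.

End RestrictedFlow.

Section EdgeBound.
Variables (T : finType) (e : rel T) (le : rel T).
Hypothesis e_simple : simple_graph e.
Hypothesis le_po : partial_order le.

Lemma flow_edge_bound (S O : {set T}) f : O \subset S -> flow_on e le S O f ->
  #|edges_in e S| + 'C(#|O|.+1, 2) <= #|O| * #|S|.
Proof.
case: e_simple => e_sym e_irr.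
move Hn : #|S| => n; elim: n S O f Hn => [|n IH] S O f Hn OS flS.
  have S0 : S = set0 by apply/eqP; rewrite -cards_eq0 Hn.
  have O0 : #|O| = 0 by apply/eqP; rewrite cards_eq0 -subset0 -S0.
  rewrite O0 bin_small // addn0 leqn0 cards_eq0; apply/eqP/setP => z.
  by rewrite inE; apply/negP => /edges_inP[a [b [+ _]]]; rewrite S0 inE.
have [SO | ] := eqVneq (S :\: O) set0.
  have SeqO : O = S by apply/eqP; rewrite eqEsubset OS -setD_eq0 SO eqxx.
  subst O; have [x xS] : exists x, x \in S by apply/set0Pn; rewrite -cards_eq0 Hn.
  have Hn' : #|S :\ x| = n by move: Hn; rewrite (cardsD1 x) xS => -[].
  have no_inner : flow_on e le (S :\ x) (S :\ x) f by move=> v ->.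
  have := IH _ (S :\ x) f Hn' (subxx _) no_inner; rewrite Hn Hn'.
  exact: (edge_bound_del_any e_sym e_irr xS Hn').
case/(exists_maximal le_po) => u uSO u_max.
have [uO uS] : u \notin O /\ u \in S by apply/andP; rewrite -in_setD.
have [fuS fuO deg_fu] := succ_maximal e_sym e_irr flS uS uO u_max.
have Hn' : #|S :\ f u| = n by move: Hn; rewrite (cardsD1 (f u)) fuS => -[].
have cardO' : #|u |: (O :\ f u)| = #|O|.
  by rewrite cardsU1 !inE (negbTE uO) andbF (cardsD1 (f u) O) fuO.
have O'S' : u |: (O :\ f u) \subset S :\ f u.
  apply/subsetP => z; rewrite !inE => /orP[/eqP-> | /andP[-> /(subsetP OS)->]] //.
  by rewrite uS andbT; apply: contraNneq uO => ->.
have IHn := IH _ _ f Hn' O'S' (flow_on_shift le_po flS uS uO).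
rewrite mulnS (addnC #|O|).
apply: leq_trans (leq_add (card_edges_in_del e_sym fuS) (leqnn _)) _.
rewrite addnAC; apply: leq_add; first by move: IHn; rewrite cardO'.
by rewrite -cardO'; exact: subset_leq_card deg_fu.
Qed.

End EdgeBound.

Theorem mainTheorem8 (T : finType) (e : rel T) (I O : {set T}) :
  simple_graph e ->
  1 <= #|O| <= #|T| ->
  has_flow e I O ->
  #|edges e| <= #|O| * #|T| - 'C(#|O|.+1, 2).
Proof.
move=> e_simple _ [f [le flow]].
have le_po : partial_order le by case: flow.
have := flow_edge_bound e_simple le_po (subsetT O) (flow_on_setT flow).
rewrite cardsT -edges_setT => bound.
rewrite leq_subRL; first by rewrite addnC.
exact: leq_trans (leq_addl _ _) bound.
Qed.
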